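(* Let $\Phi:\mathbb R\to\mathbb R$ and $\hbar:[0,1]\to\mathbb R$ be differentiable functions such that $\Phi$ is strictly monotone, and for every $0\le c\le1$ the function $\hbar_c(x)=\hbar(x)+\hbar(c-x)$ is strictly monotone on $[0,c/2]$ and $\Phi(\hbar_c)$ is strictly increasing on $[0,c/2]$. Let $m,n\ge2$ and let $\mathbf p\in\mathbb R^m$, $\mathbf q\in\mathbb R^n$ be probability vectors with all entries strictly positive. Then the $(\Phi,\hbar)$-entropy $H(P)=\Phi\big(\sum_{i=1}^m\sum_{j=1}^n\hbar(p_{i,j})\big)$ is strict Schur-concave on $\mathcal C(\mathbf p,\mathbf q)$.
   Context: $\mathcal C(\mathbf p,\mathbf q)$: nonnegative $m\times n$ matrices $P=(p_{i,j})$ with row sums $p_i$, column sums $q_j$, viewed as vectors in $\mathbb R^{mn}$. Majorization: for $x,y\in\mathbb R^N$ with decreasing rearrangements $\bar x,\bar y$ and $F_{\bar x}(i)=\sum_{k\le i}\bar x_k$, $x\preceq y$ if $F_{\bar x}(i)\le F_{\bar y}(i)$ for $1\le i<N$ and $F_{\bar x}(N)=F_{\bar y}(N)$; $x\prec y$ if moreover strict inequality holds for some $i<N$. A symmetric function $\Psi$ is strict Schur-concave if $x\preceq y$ implies $\Psi(x)\ge\Psi(y)$ and $x\prec y$ implies $\Psi(x)>\Psi(y)$. *)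

From HB Require Import structures.
From mathcomp Require Import all_boot all_order all_algebra.
From mathcomp Require Import all_classical all_reals all_analysis.
Set Implicit Arguments. Unset Strict Implicit. Unset Printing Implicit Defensive.
Import Order.TTheory GRing.Theory Num.Theory.
Import numFieldNormedType.Exports.
Local Open Scope classical_set_scope.
Local Open Scope ring_scope.

Section Defs.
Variable R : realType.

Definition decr_rearr (N : nat) (x : 'rV[R]_N) : seq R :=
  sort (fun a b : R => b <= a) [seq x 0 i | i <- enum 'I_N].

(* F_{xbar}(i) = sum_{k <= i} xbar_k  (1-indexed) *)
Definition Fpart (N : nat) (x : 'rV[R]_N) (i : nat) : R :=
  \sum_(k < i) nth 0 (decr_rearr x) k.

Definition majorized (N : nat) (x y : 'rV[R]_N) : Prop :=
  (forall i : nat, (1 <= i < N)%N -> Fpart x i <= Fpart y i)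
  /\ Fpart x N = Fpart y N.

Definition strictly_majorized (N : nat) (x y : 'rV[R]_N) : Prop :=
  majorized x y /\ exists i : nat, (1 <= i < N)%N /\ Fpart x i < Fpart y i.

Definition pos_prob_vec (k : nat) (p : 'I_k -> R) : Prop :=
  (forall i, 0 < p i) /\ \sum_(i < k) p i = 1.

Definition coupling (m n : nat) (p : 'I_m -> R) (q : 'I_n -> R) : set 'M[R]_(m, n) :=
  [set P | (forall i j, 0 <= P i j)
           /\ (forall i, \sum_(j < n) P i j = p i)
           /\ (forall j, \sum_(i < m) P i j = q j)].

Definition strict_schur_concave_on (m n : nat) (S : set 'M[R]_(m, n))
    (Psi : 'M[R]_(m, n) -> R) : Prop :=
  forall P Q, S P -> S Q ->
    (majorized (mxvec P) (mxvec Q) -> Psi Q <= Psi P) /\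
    (strictly_majorized (mxvec P) (mxvec Q) -> Psi Q < Psi P).

Definition strictly_increasing_on (A : set R) (f : R -> R) : Prop :=
  forall x y, A x -> A y -> x < y -> f x < f y.

Definition strictly_decreasing_on (A : set R) (f : R -> R) : Prop :=
  forall x y, A x -> A y -> x < y -> f y < f x.

Definition strictly_monotone_on (A : set R) (f : R -> R) : Prop :=
  strictly_increasing_on A f \/ strictly_decreasing_on A f.

(* differentiability of f at x relative to the set A (one-sided at endpoints
   of an interval): the difference quotient has a finite limit as t -> 0
   with t <> 0 and x + t in A *)
Definition derivable_within (A : set R) (f : R -> R) (x : R) : Prop :=
  exists l : R,
    (fun t : R => (f (x + t) - f x) / t) @
      (within (fun t : R => t != 0 /\ A (x + t)) (nbhs (0 : R))) --> l.

Definition differentiable_on (A : set R) (f : R -> R) : Prop :=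
  forall x, A x -> derivable_within A f x.

Definition phi_h_entropy (m n : nat) (Phi h : R -> R) (P : 'M[R]_(m, n)) : R :=
  Phi (\sum_(i < m) \sum_(j < n) h (P i j)).

End Defs.

From HB Require Import structures.
From mathcomp Require Import all_boot all_order all_algebra.
From mathcomp Require Import all_classical all_reals all_analysis.
From mathcomp Require Import ring lra.
Import Order.TTheory GRing.Theory Num.Theory.
Import numFieldNormedType.Exports.
Set Implicit Arguments. Unset Strict Implicit. Unset Printing Implicit Defensive.
Local Open Scope classical_set_scope.
Local Open Scope ring_scope.

(* Sort the entries of P and of Q decreasingly into x and y, so that P ⪯ Q
   says that the prefix sums of y dominate those of x, with equal totals.
   While y <> x, let j be the first index with y_j > x_j and k the first later
   index with y_k < x_k, and move d = min (y_j - x_j) (x_k - y_k) from y_j to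
   y_k. Prefix domination survives, one more coordinate of y agrees with x, and
   y_k + d <= x_k <= x_j <= y_j - d, so the monotonicity of Phi (h_c) on
   [0, c/2] with c = y_j + y_k <= 1 makes the entropy increase strictly. When
   Phi decreases, replace Phi and h by u |-> Phi (- u) and - h. *)

Section Transfer.
Variable R : realDomainType.

Definition transfer_increasing (s : R) (G : R -> R) : Prop :=
  forall a b d, 0 <= a -> 0 < d -> a + d <= b - d -> a + b <= s ->
    G a + G b < G (a + d) + G (b - d).

Lemma sum_ord_indicator (i j : nat) (c : R) :
  \sum_(l < i) (l == j :> nat)%:R * c = (j < i)%:R * c.
Proof.
elim: i => [|i IH]; first by rewrite big_ord0 mul0r.
rewrite big_ord_recr /= IH [(j < i.+1)%N]ltnS [(j <= i)%N]leq_eqVlt.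
have [->|_] := eqVneq j i; first by rewrite ltnn mul0r mul1r add0r.
by rewrite mul0r addr0.
Qed.

Lemma sum_update2 (f g : nat -> R) (i j k : nat) : j != k ->
  (forall l, l != j -> l != k -> f l = g l) ->
  \sum_(l < i) f l =
    \sum_(l < i) g l + (j < i)%:R * (f j - g j) + (k < i)%:R * (f k - g k).
Proof.
move=> njk fg.
have fE l : f l = g l + (l == j)%:R * (f j - g j) + (l == k)%:R * (f k - g k).
  have [->|lj] := eqVneq l j; first by rewrite (negbTE njk) /=; ring.
  have [->|lk] := eqVneq l k; first by rewrite /=; ring.
  by rewrite fg //=; ring.
rewrite (eq_bigr (fun l : 'I_i => g l + (l == j :> nat)%:R * (f j - g j)
                                 + (l == k :> nat)%:R * (f k - g k))) => [|l _]; last exact: fE.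
by rewrite !big_split /= !sum_ord_indicator.
Qed.

Lemma pair_le_sum N (y : nat -> R) j k : j != k -> (j < N)%N -> (k < N)%N ->
  (forall l, (l < N)%N -> 0 <= y l) -> y j + y k <= \sum_(l < N) y l.
Proof.
move=> njk jN kN y0.
rewrite (bigD1 (Ordinal jN)) //= (bigD1 (Ordinal kN)) /=; last by rewrite -val_eqE /= eq_sym.
rewrite addrA lerDl; apply: sumr_ge0 => l _; exact: y0.
Qed.

Definition transfer (y : nat -> R) (j k : nat) (d : R) (l : nat) : R :=
  if l == j then y j - d else if l == k then y k + d else y l.

Lemma transfer_out y j k d l : l != j -> l != k -> transfer y j k d l = y l.
Proof. by rewrite /transfer => /negbTE-> /negbTE->. Qed.

Lemma sum_transfer y j k d i : j != k ->
  \sum_(l < i) transfer y j k d l = \sum_(l < i) y l - (j < i)%:R * d + (k < i)%:R * d.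
Proof.
move=> njk; rewrite (@sum_update2 (transfer y j k d) y i j k njk); last exact: transfer_out.
by rewrite /transfer eqxx eq_sym (negbTE njk) eqxx; ring.
Qed.

Lemma sum_comp_transfer (F : R -> R) N y j k d : j != k -> (j < N)%N -> (k < N)%N ->
  \sum_(l < N) F (transfer y j k d l) =
    \sum_(l < N) F (y l) + (F (y j - d) - F (y j)) + (F (y k + d) - F (y k)).
Proof.
move=> njk jN kN.
rewrite (@sum_update2 (fun l => F (transfer y j k d l)) (fun l => F (y l)) N j k njk).
  by rewrite /transfer eqxx eq_sym (negbTE njk) eqxx jN kN !mul1r.
by move=> l lj lk; rewrite transfer_out.
Qed.

Section PrefixMajorant.
Variables (s : R) (G : R -> R) (N : nat) (x : nat -> R).
Hypothesis G_transfer : transfer_increasing s G.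
Hypothesis x_nonincr : forall a b, (a <= b < N)%N -> x b <= x a.
Hypothesis x_ge0 : forall k, (k < N)%N -> 0 <= x k.
Hypothesis x_mass : \sum_(k < N) x k <= s.

(* y is compared with x in its own order: it need not stay sorted after a transfer. *)
Definition prefix_majorant (y : nat -> R) : Prop :=
  [/\ forall k, (k < N)%N -> 0 <= y k,
      forall i, (i <= N)%N -> \sum_(k < i) x k <= \sum_(k < i) y k
    & \sum_(k < N) x k = \sum_(k < N) y k].

Definition differences (y : nat -> R) : {set 'I_N} := [set l : 'I_N | x l != y l].

Lemma first_excess y : prefix_majorant y -> (exists k : 'I_N, x k != y k) ->
  exists j, [/\ (j < N)%N, x j < y j & forall l, (l < j)%N -> x l = y l].
Proof.
case=> _ ypre _ [k0 xk0].
have exj : exists l, (l < N)%N && (x l != y l) by exists k0; rewrite ltn_ord xk0.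
case: (ex_minnP exj) => j /andP[jN xyj] jmin.
have eqlj l : (l < j)%N -> x l = y l.
  move=> lj; apply/eqP/negPn/negP => xyl.
  by have := jmin l; rewrite xyl andbT (ltn_trans lj jN) leqNgt lj => /(_ isT).
exists j; split=> //.
have sumj : \sum_(l < j) x l = \sum_(l < j) y l by apply: eq_bigr => l _; exact: eqlj.
have := ypre j.+1 jN; rewrite !big_ord_recr /= sumj lerD2l => le_xy.
by rewrite lt_neqAle xyj le_xy.
Qed.

Lemma transfer_pair y : prefix_majorant y -> (exists k : 'I_N, x k != y k) ->
  exists j k, [/\ (j < k < N)%N, x j < y j, y k < x k &
    forall i, (j < i <= k)%N -> \sum_(l < i) x l + (y j - x j) <= \sum_(l < i) y l].
Proof.
move=> ym ex; have [j [jN xyj eqlj]] := first_excess ym ex.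
case: ym => _ _ ytot.
have sumj : \sum_(l < j) x l = \sum_(l < j) y l by apply: eq_bigr => l _; exact: eqlj.
have exk : exists l, (j < l < N)%N && (y l < x l).
  case: (pickP (fun l : 'I_N => (j < l)%N && (y l < x l))) => [l /andP[jl ylx]|none].
    by exists l; rewrite jl ltn_ord ylx.
  suff : \sum_(l < N) x l < \sum_(l < N) y l by rewrite ytot ltxx.
  rewrite (bigD1 (Ordinal jN)) // [X in _ < X](bigD1 (Ordinal jN)) //=.
  apply: ltr_leD => //; apply: ler_sum => l _.
  case: (ltngtP l j) => [lj|jl|->]; first by rewrite eqlj.
    by have := none l; rewrite jl /= => /negbT; rewrite -leNgt.
  exact: ltW.
case: (ex_minnP exk) => k /andP[/andP[jk kN] ykx] kmin.
have x_le_y l : (j < l < k)%N -> x l <= y l.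
  case/andP=> jl lk; rewrite leNgt; apply/negP => ylx.
  by have := kmin l; rewrite jl ylx (ltn_trans lk kN) leqNgt lk => /(_ isT).
exists j, k; split; rewrite ?jk ?kN //.
elim=> // i IH /andP[ji ik]; rewrite !big_ord_recr /=.
move: ji; rewrite ltnS leq_eqVlt => /predU1P[<-|ji]; first by rewrite sumj; lra.
have /IH IHi : (j < i <= k)%N by rewrite ji ltnW.
have /x_le_y le_i : (j < i < k)%N by rewrite ji ik.
lra.
Qed.

Lemma transfer_prefix_majorant y j k d : prefix_majorant y -> (j < k < N)%N ->
  0 <= d -> d <= y j - x j -> d <= x k - y k ->
  (forall i, (j < i <= k)%N -> \sum_(l < i) x l + (y j - x j) <= \sum_(l < i) y l) ->
  prefix_majorant (transfer y j k d).
Proof.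
case=> y0 ypre ytot /andP[jk kN] d0 dj dk gap.
have jN := ltn_trans jk kN; have njk : j != k by rewrite ltn_eqF.
split.
- move=> l lN; rewrite /transfer.
  case: ifP => _; first by have := x_ge0 jN; lra.
  by case: ifP => _; [have := y0 k kN; lra | exact: y0].
- move=> i iN; rewrite sum_transfer //; have := ypre i iN.
  case: (ltnP k i) => [ki|ik]; first by rewrite (ltn_trans jk ki); lra.
  case: (ltnP j i) => [ji|ij]; last by lra.
  have /gap : (j < i <= k)%N by rewrite ji ik.
  rewrite mul1r mul0r; lra.
- by rewrite sum_transfer // jN kN !mul1r; lra.
Qed.

Lemma transfer_differences_proper y j k : (j < k < N)%N -> x j < y j -> y k < x k ->
  differences (transfer y j k (Num.min (y j - x j) (x k - y k))) \proper differences y.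
Proof.
case/andP=> jk kN xyj ykx; have jN := ltn_trans jk kN.
apply/properP; split.
  apply/fintype.subsetP => l; rewrite !inE /transfer.
  case: ifP => [/eqP->|_]; first by rewrite (lt_eqF xyj).
  by case: ifP => [/eqP->|_] //; rewrite (gt_eqF ykx).
have [_|_] := leP (y j - x j) (x k - y k).
  by exists (Ordinal jN); rewrite !inE /transfer /= ?(lt_eqF xyj) // eqxx opprB subrKC eqxx.
exists (Ordinal kN); rewrite !inE /transfer /= ?(gt_eqF ykx) // gtn_eqF // eqxx.
by rewrite subrKC eqxx.
Qed.

Lemma sum_transfer_lt y j k d : prefix_majorant y -> (j < k < N)%N ->
  0 < d -> d <= y j - x j -> d <= x k - y k ->
  \sum_(l < N) G (y l) < \sum_(l < N) G (transfer y j k d l).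
Proof.
case=> y0 _ ytot /andP[jk kN] d0 dj dk.
have jN := ltn_trans jk kN; have njk : j != k by rewrite ltn_eqF.
have yjk : y k + y j <= s.
  by rewrite addrC (le_trans (pair_le_sum njk jN kN y0)) // -ytot.
have /x_nonincr le_xkj : (j <= k < N)%N by rewrite ltnW.
have := G_transfer (y0 k kN) d0 _ yjk.
rewrite sum_comp_transfer //; lra.
Qed.

Lemma transfer_step y : prefix_majorant y -> (exists k : 'I_N, x k != y k) ->
  exists2 y', prefix_majorant y' /\ (#|differences y'| < #|differences y|)%N
    & \sum_(l < N) G (y l) < \sum_(l < N) G (y' l).
Proof.
move=> ym ex; have [j [k [jkN xyj ykx gap]]] := transfer_pair ym ex.
pose d := Num.min (y j - x j) (x k - y k).
have d_gt0 : 0 < d by rewrite lt_min !subr_gt0 xyj ykx.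
have dj : d <= y j - x j by rewrite ge_min lexx.
have dk : d <= x k - y k by rewrite ge_min lexx orbT.
exists (transfer y j k d); last exact: sum_transfer_lt.
split; first exact: transfer_prefix_majorant (ltW d_gt0) dj dk gap.
exact/proper_card/transfer_differences_proper.
Qed.

Lemma prefix_majorant_sum_lt y : prefix_majorant y -> (exists k : 'I_N, x k != y k) ->
  \sum_(k < N) G (y k) < \sum_(k < N) G (x k).
Proof.
have [c] := ubnP #|differences y|; elim: c y => // c IH y lt_diff ym ex.
have [y' [y'm lt_diff'] lt_G] := transfer_step ym ex.
case: (pickP (fun k : 'I_N => x k != y' k)) => [k xk|eq_xy'].
  apply: lt_trans lt_G (IH y' _ y'm _); last by exists k.
  by apply: leq_trans lt_diff' _; rewrite -ltnS.
suff -> : \sum_(k < N) G (x k) = \sum_(k < N) G (y' k) by [].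
by apply: eq_bigr => k _; have /negbFE/eqP-> := eq_xy' k.
Qed.

Lemma prefix_majorant_sum_le y : prefix_majorant y ->
  \sum_(k < N) G (y k) <= \sum_(k < N) G (x k).
Proof.
move=> ym; case: (pickP (fun k : 'I_N => x k != y k)) => [k xk|eq_xy].
  by apply/ltW/prefix_majorant_sum_lt => //; exists k.
suff -> : \sum_(k < N) G (y k) = \sum_(k < N) G (x k) by [].
by apply: eq_bigr => k _; have /negbFE/eqP-> := eq_xy k.
Qed.

End PrefixMajorant.

End Transfer.

Section Rearrangement.
Variable R : realType.

Lemma size_decr_rearr N (v : 'rV[R]_N) : size (decr_rearr v) = N.
Proof. by rewrite size_sort size_map size_enum_ord. Qed.

Lemma sum_decr_rearr N (v : 'rV[R]_N) (F : R -> R) :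
  \sum_(k < N) F (nth 0 (decr_rearr v) k) = \sum_(k < N) F (v 0 k).
Proof.
transitivity (\sum_(0 <= k < size (decr_rearr v)) F (nth 0 (decr_rearr v) k)).
  by rewrite size_decr_rearr big_mkord.
rewrite -(big_nth 0 xpredT) (perm_big [seq v 0 i | i <- enum 'I_N]).
  by rewrite big_map big_enum.
by rewrite perm_sort perm_refl.
Qed.

Lemma decr_rearr_nonincr N (v : 'rV[R]_N) a b : (a <= b < N)%N ->
  nth 0 (decr_rearr v) b <= nth 0 (decr_rearr v) a.
Proof.
case/andP=> ab bN.
have sorted_v : sorted (fun a b : R => b <= a) (decr_rearr v).
  by apply: sort_sorted => u w; exact: le_total.
apply: (sorted_leq_nth _ _ 0 sorted_v) => //.
- by move=> u w z /= wu zw; exact: le_trans zw wu.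
- by rewrite inE size_decr_rearr (leq_ltn_trans ab bN).
- by rewrite inE size_decr_rearr.
Qed.

Lemma decr_rearr_ge0 N (v : 'rV[R]_N) k : (forall i, 0 <= v 0 i) ->
  0 <= nth 0 (decr_rearr v) k.
Proof.
move=> v0; have [kN|Nk] := ltnP k (size (decr_rearr v)); last by rewrite nth_default.
have := mem_nth 0 kN; rewrite mem_sort => /mapP[i _ ->]; exact: v0.
Qed.

Lemma majorized_prefix_majorant N (v w : 'rV[R]_N) : (forall i, 0 <= w 0 i) ->
  majorized v w -> prefix_majorant N (nth 0 (decr_rearr v)) (nth 0 (decr_rearr w)).
Proof.
move=> w0 [le_F eq_F]; split=> // [k _|i]; first exact: decr_rearr_ge0.
rewrite leq_eqVlt => /predU1P[->|iN]; first by rewrite -/(Fpart v N) eq_F.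
have [->|i_gt0] := posnP i; first by rewrite !big_ord0.
by apply: le_F; rewrite i_gt0.
Qed.

Section MajorizedSums.
Variables (s : R) (G : R -> R) (N : nat) (v w : 'rV[R]_N).
Hypotheses (G_transfer : transfer_increasing s G) (v0 : forall i, 0 <= v 0 i)
  (w0 : forall i, 0 <= w 0 i) (v_mass : \sum_i v 0 i <= s).

Let x_ge0 k (_ : (k < N)%N) : 0 <= nth 0 (decr_rearr v) k := decr_rearr_ge0 k v0.

Let x_mass : \sum_(k < N) nth 0 (decr_rearr v) k <= s.
Proof. by rewrite (sum_decr_rearr v id). Qed.

Lemma majorized_sum_le : majorized v w -> \sum_i G (w 0 i) <= \sum_i G (v 0 i).
Proof.
move=> vw; rewrite -(sum_decr_rearr v) -(sum_decr_rearr w).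
apply: prefix_majorant_sum_le G_transfer (@decr_rearr_nonincr _ v) x_ge0 x_mass _ _.
exact: majorized_prefix_majorant.
Qed.

Lemma strictly_majorized_sum_lt :
  strictly_majorized v w -> \sum_i G (w 0 i) < \sum_i G (v 0 i).
Proof.
move=> [vw [i [/andP[_ iN] lt_F]]]; rewrite -(sum_decr_rearr v) -(sum_decr_rearr w).
apply: prefix_majorant_sum_lt G_transfer (@decr_rearr_nonincr _ v) x_ge0 x_mass _ _ _.
  exact: majorized_prefix_majorant.
case: (pickP (fun k : 'I_N => nth 0 (decr_rearr v) k != nth 0 (decr_rearr w) k)).
  by move=> k ne_k; exists k.
move=> eq_vw; move: lt_F; rewrite /Fpart.
rewrite (eq_bigr (fun k : 'I_i => nth 0 (decr_rearr w) k)) ?ltxx //.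
by move=> k _; have /negbFE/eqP-> := eq_vw (widen_ord (ltnW iN) k).
Qed.

End MajorizedSums.

Lemma sum_mxvec m n (M : 'M[R]_(m, n)) (F : R -> R) :
  \sum_(k < m * n) F (mxvec M 0 k) = \sum_i \sum_j F (M i j).
Proof.
rewrite (reindex _ (curry_mxvec_bij m n)) pair_big /=.
by apply: eq_bigr => -[i j] _; rewrite mxvecE.
Qed.

Lemma strict_schur_concave_on_coupling_sum G m n (p : 'I_m -> R) (q : 'I_n -> R) :
  transfer_increasing 1 G -> \sum_i p i = 1 ->
  strict_schur_concave_on (coupling p q) (fun P => \sum_i \sum_j G (P i j)).
Proof.
move=> G_transfer p_mass P Q [P0 [Prow _]] [Q0 _].
have mxvec_ge0 (M : 'M[R]_(m, n)) : (forall i j, 0 <= M i j) -> forall k, 0 <= mxvec M 0 k.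
  by move=> M0 k; case/mxvec_indexP: k => i j; rewrite mxvecE.
have P_mass : \sum_k mxvec P 0 k <= 1.
  by rewrite (sum_mxvec P id) (eq_bigr _ (fun i _ => Prow i)) p_mass.
rewrite -!sum_mxvec; split.
  exact: majorized_sum_le G_transfer (mxvec_ge0 _ P0) (mxvec_ge0 _ Q0) P_mass.
exact: strictly_majorized_sum_lt G_transfer (mxvec_ge0 _ P0) (mxvec_ge0 _ Q0) P_mass.
Qed.

Lemma strictly_increasing_on_setT_lt (F : R -> R) u v :
  strictly_increasing_on setT F -> F u < F v -> u < v.
Proof.
move=> F_incr; apply: contraTT; rewrite -!leNgt le_eqVlt => /predU1P[->//|vu].
exact/ltW/F_incr.
Qed.

Lemma strict_schur_concave_on_comp m n (S : set 'M[R]_(m, n)) (F : R -> R) Psi :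
  strictly_increasing_on setT F -> strict_schur_concave_on S Psi ->
  strict_schur_concave_on S (F \o Psi).
Proof.
move=> F_incr Psi_sc P Q SP SQ; have [le_Psi lt_Psi] := Psi_sc P Q SP SQ; split.
  by move/le_Psi; rewrite le_eqVlt => /predU1P[/= ->//|/(F_incr _ _ I I)/ltW].
by move/lt_Psi/(F_incr _ _ I I).
Qed.

Lemma entropy_transfer_lt (Phi h : R -> R) :
  (forall c, 0 <= c <= 1 ->
     strictly_increasing_on `[0, c / 2] (fun x => Phi (h x + h (c - x)))) ->
  forall a b d, 0 <= a -> 0 < d -> a + d <= b - d -> a + b <= 1 ->
    Phi (h a + h b) < Phi (h (a + d) + h (b - d)).
Proof.
move=> hc a b d a0 d0 adb ab1.
have c01 : 0 <= a + b <= 1 by apply/andP; split; lra.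
have -> : b = a + b - a by ring.
have -> : a + b - a - d = a + b - (a + d) by ring.
apply: (hc _ c01); rewrite /= ?in_itv /=; lra.
Qed.

Lemma entropy_strict_schur_concave_incr (Phi h : R -> R) m n (p : 'I_m -> R) (q : 'I_n -> R) :
  strictly_increasing_on setT Phi ->
  (forall c, 0 <= c <= 1 ->
     strictly_increasing_on `[0, c / 2] (fun x => Phi (h x + h (c - x)))) ->
  \sum_i p i = 1 -> strict_schur_concave_on (coupling p q) (phi_h_entropy Phi h).
Proof.
move=> Phi_incr hc p_mass; apply: (strict_schur_concave_on_comp Phi_incr).
apply: strict_schur_concave_on_coupling_sum p_mass => a b d a0 d0 adb ab1.
exact: strictly_increasing_on_setT_lt Phi_incr (entropy_transfer_lt hc a0 d0 adb ab1).
Qed.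

Lemma phi_h_entropy_opp (Phi h : R -> R) m n :
  @phi_h_entropy R m n Phi h =1 phi_h_entropy (fun u => Phi (- u)) (fun x => - h x).
Proof.
move=> P; rewrite /phi_h_entropy; under [in RHS]eq_bigr do rewrite sumrN.
by rewrite sumrN opprK.
Qed.

End Rearrangement.

Unset Implicit Arguments.

Theorem proposition4p1 (R : realType) (Phi h : R -> R) (m n : nat)
    (p : 'I_m -> R) (q : 'I_n -> R) :
  (forall x : R, derivable Phi x 1) ->
  strictly_monotone_on setT Phi ->
  differentiable_on `[0, 1] h ->
  (forall c : R, 0 <= c <= 1 ->
     strictly_monotone_on `[0, c / 2] (fun x => h x + h (c - x)) /\
     strictly_increasing_on `[0, c / 2] (fun x => Phi (h x + h (c - x)))) ->
  (2 <= m)%N -> (2 <= n)%N ->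
  pos_prob_vec p -> pos_prob_vec q ->
  strict_schur_concave_on (coupling p q) (phi_h_entropy Phi h).
Proof.
move=> _ Phi_mono _ hc _ _ [_ p_mass] _.
have hc_incr c (c01 : 0 <= c <= 1) := (hc c c01).2.
case: Phi_mono => [Phi_incr|Phi_decr].
  exact: entropy_strict_schur_concave_incr hc_incr p_mass.
rewrite (funext (@phi_h_entropy_opp R Phi h m n)).
apply: entropy_strict_schur_concave_incr p_mass.
  by move=> u v _ _ uv; apply: Phi_decr; rewrite // ltrN2.
move=> c /hc_incr hc_c u v Iu Iv uv.
by rewrite -!opprD !opprK; exact: hc_c.
Qed.
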